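(* Let $t\ge3$ and let $p_1,\dots,p_t$ be distinct primes, $n=p_1p_2\cdots p_t$. Then $i(X_n)\le 4p_1p_2\cdots p_{t-3}$ (the empty product being $1$ when $t=3$).
   Context: $X_n$ is the graph on $\{0,\dots,n-1\}$ with $a,b$ adjacent iff $\gcd(a-b,n)=1$. $i(G)$ is the minimum size of a maximal (under inclusion) independent set of $G$. *)

From mathcomp Require Import all_boot.
Set Implicit Arguments. Unset Strict Implicit. Unset Printing Implicit Defensive.

(* The graph X_n on {0,...,n-1}: a, b adjacent iff gcd(a - b, n) = 1,
   where |a - b| is used (gcd is sign-insensitive; gcd(0,n) = n). *)
Definition absdiff (a b : nat) : nat := if a <= b then b - a else a - b.

Definition Xadj (n : nat) (a b : 'I_n) : bool := coprime (absdiff a b) n.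

Definition Xindep (n : nat) (S : {set 'I_n}) : bool :=
  [forall x in S, forall y in S, ~~ Xadj x y].

Definition Xmaxindep (n : nat) (S : {set 'I_n}) : bool :=
  maxset (@Xindep n) S.

(* i(X_n): minimum size of a maximal independent set (n is an upper bound,
   attained only vacuously; maximal independent sets always exist). *)
Definition iX (n : nat) : nat :=
  \big[minn/n]_(S : {set 'I_n} | Xmaxindep S) #|S|.

From mathcomp Require Import all_boot zify.
Set Implicit Arguments. Unset Strict Implicit. Unset Printing Implicit Defensive.

(* Pick three of the primes, q, r and s, and let S be the set of vertices x
   whose residues (x mod q, x mod r, x mod s) form a word of the even-weight
   code {000, 011, 101, 110}.  Two codewords always agree in some coordinate,
   so S is independent.  A non-codeword is disagreed with in every coordinate
   by some codeword, so by the Chinese remainder theorem every y outside S has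
   a neighbour in S (congruent to y + 1 modulo every other prime).  Finally S
   has 4 n / (q r s) elements. *)

Lemma geq_bigmin_cond (I : finType) (P : pred I) (F : I -> nat) n0 i0 :
  P i0 -> \big[minn/n0]_(i | P i) F i <= F i0.
Proof.
rewrite unlock; elim: (index_enum I) (mem_index_enum i0) => //= i s IH.
rewrite inE => /orP[/eqP<- -> | i0s Pi0]; first exact: geq_minl.
by case: (P i); [apply: leq_trans (geq_minr _ _) _|]; apply: IH.
Qed.

Lemma coprime_absdiff_prime a b p :
  prime p -> coprime (absdiff a b) p = (a %% p != b %% p).
Proof.
move=> pr_p; rewrite coprime_sym prime_coprime // /absdiff.
by case: leqP => [le_ab | /ltnW le_ba]; rewrite -eqn_mod_dvd // eq_sym.
Qed.

Lemma coprime_prime_divisors a n : 0 < n ->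
  (forall p, prime p -> p %| n -> ~~ (p %| a)) -> coprime a n.
Proof.
move=> n_gt0 noP; rewrite /coprime eqn_leq gcdn_gt0 n_gt0 orbT andbT leqNgt.
apply/negP => /pdiv_prime pr_d.
have := noP _ pr_d (dvdn_trans (pdiv_dvd _) (dvdn_gcdr a n)).
by rewrite (dvdn_trans (pdiv_dvd _) (dvdn_gcdl a n)).
Qed.

Lemma XadjP n (x y : 'I_n) :
  reflect (forall p, prime p -> p %| n -> x %% p != y %% p) (Xadj x y).
Proof.
apply: (iffP idP) => [adj p pr_p p_n | sep].
  by rewrite -coprime_absdiff_prime // (coprime_dvdr p_n).
apply: coprime_prime_divisors => [|p pr_p p_n]; first exact: leq_ltn_trans (ltn_ord x).
by rewrite -prime_coprime // coprime_sym coprime_absdiff_prime // sep.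
Qed.

Lemma XindepP n (S : {set 'I_n}) :
  reflect {in S &, forall x y, ~~ Xadj x y} (Xindep S).
Proof.
apply: (iffP forall_inP) => [ind x y xS yS | ind x xS].
  by have /forall_inP := ind x xS; apply.
by apply/forall_inP => y yS; apply: ind.
Qed.

Lemma Xmaxindep_dominating n (S : {set 'I_n}) : Xindep S ->
  (forall y, y \notin S -> exists2 x, x \in S & Xadj x y) -> Xmaxindep S.
Proof.
move=> indS domS; apply/maxsetP; split=> // B /XindepP indB sSB.
apply/eqP; rewrite eqEsubset sSB andbT; apply/subsetP => y yB.
apply/negPn/negP => /domS[x xS adj_xy].
by have := indB x y (subsetP sSB x xS) yB; rewrite adj_xy.
Qed.

Lemma iX_le_card n (S : {set 'I_n}) : Xmaxindep S -> iX n <= #|S|.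
Proof. exact: geq_bigmin_cond. Qed.

Lemma chinese_seq (I : eqType) (d r : I -> nat) (s : seq I) : uniq s ->
  {in s &, forall i j, i != j -> coprime (d i) (d j)} ->
  exists x, forall i, i \in s -> x = r i %[mod d i].
Proof.
elim: s => [|i s IH] /=; first by exists 0.
move=> /andP[i_s uniq_s] cop.
have [x Ex] := IH uniq_s (sub_in2 (fun j js => mem_behead js) cop).
have cop_i : coprime (\prod_(j <- s) d j) (d i).
  rewrite big_seq; elim/big_ind: _ => [|M N|j js]; first exact: coprime1n.
    by rewrite coprimeMl => -> ->.
  by rewrite cop ?inE ?js ?orbT ?eqxx //; apply: contraNneq i_s => <-.
exists (chinese (\prod_(j <- s) d j) (d i) x (r i)) => j.
rewrite inE => /predU1P[-> | js]; first exact: chinese_modr.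
have dj : d j %| \prod_(k <- s) d k by rewrite (big_rem j js) dvdn_mulr.
by rewrite -(Ex j js) -(modn_dvdm _ dj) chinese_modl // modn_dvdm.
Qed.

Definition even_weight3 (a b c : nat) : bool :=
  [&& a < 2, b < 2, c < 2 & ~~ odd (a + b + c)].

Lemma even_weight3_agree a b c a' b' c' :
  even_weight3 a b c -> even_weight3 a' b' c' -> [|| a == a', b == b' | c == c'].
Proof.
by case: a => [|[|]] //; case: b => [|[|]] //; case: c => [|[|]] //;
   case: a' => [|[|]] //; case: b' => [|[|]] //; case: c' => [|[|]].
Qed.

Lemma even_weight3_opposite a b c : ~~ even_weight3 a b c ->
  exists a' b' c', [/\ even_weight3 a' b' c', a' != a, b' != b & c' != c].
Proof.
move: a b c => [|[|a]] [|[|b]] [|[|c]] //= _;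
  first [by exists 0, 0, 0 | by exists 0, 1, 1 | by exists 1, 0, 1 | by exists 1, 1, 0].
Qed.

Lemma even_weight3_last a b c : even_weight3 a b c -> c = odd (a + b).
Proof. by case/and4P=> _ _; case: c => [|[|]] //; rewrite ?addn0 ?addn1 /=; case: odd. Qed.

Lemma modn_succ_neq x p : 1 < p -> x.+1 %% p != x %% p.
Proof.
move=> p_gt1; rewrite eqn_mod_dvd // subSnn dvdn1.
by apply: contraTneq p_gt1 => ->.
Qed.

Lemma bits_encode_lt d a b N : a < 2 -> b < 2 -> d < N -> d * 4 + a * 2 + b < 4 * N.
Proof. lia. Qed.

Lemma bits_encode_inj d a b d' a' b' : a < 2 -> b < 2 -> a' < 2 -> b' < 2 ->
  d * 4 + a * 2 + b = d' * 4 + a' * 2 + b' -> [/\ d = d', a = a' & b = b'].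
Proof. by move=> *; split; lia. Qed.

Section ThreePrimeFactors.

Variables n q r s : nat.
Hypotheses (pr_q : prime q) (pr_r : prime r) (pr_s : prime s).
Hypotheses (neq_qr : q != r) (neq_qs : q != s) (neq_rs : r != s).
Hypothesis qrs_dvd_n : q * r * s %| n.

Let q_dvd_n : q %| n. Proof. exact: dvdn_trans (dvdn_mulr _ (dvdn_mulr _ (dvdnn q))) qrs_dvd_n. Qed.
Let r_dvd_n : r %| n. Proof. exact: dvdn_trans (dvdn_mulr _ (dvdn_mull _ (dvdnn r))) qrs_dvd_n. Qed.
Let s_dvd_n : s %| n. Proof. exact: dvdn_trans (dvdn_mull _ (dvdnn s)) qrs_dvd_n. Qed.

Definition code_set : {set 'I_n} :=
  [set x : 'I_n | even_weight3 (x %% q) (x %% r) (x %% s)].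

Lemma code_set_indep : Xindep code_set.
Proof.
apply/XindepP => x y; rewrite !inE => Sx Sy; apply/XadjP => sep.
have /or3P[] := even_weight3_agree Sx Sy; apply/negP; exact: sep.
Qed.

Lemma code_set_dominating y :
  y \notin code_set -> exists2 x, x \in code_set & Xadj x y.
Proof.
rewrite inE => /even_weight3_opposite[a [b [c [code na nb nc]]]].
have [a2 b2 c2 _] := and4P code.
pose res p := if p == q then a else if p == r then b else if p == s then c else y.+1.
have cop_primes : {in primes n &, forall p p', p != p' -> coprime p p'}.
  move=> p p'; rewrite !mem_primes => /and3P[pr_p _ _] /and3P[pr_p' _ _] neq.
  by rewrite prime_coprime // dvdn_prime2.
have [z Ez] := chinese_seq res (primes_uniq n) cop_primes.
have n_gt0 : 0 < n := leq_ltn_trans (leq0n _) (ltn_ord y).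
pose x : 'I_n := Ordinal (ltn_pmod z n_gt0).
have xmod p : prime p -> p %| n -> x %% p = res p %% p.
  by move=> pr_p p_n; rewrite modn_dvdm // Ez // mem_primes pr_p n_gt0.
have [xq xr xs] : [/\ x %% q = a, x %% r = b & x %% s = c].
  rewrite !xmod // /res eqxx eq_sym (negbTE neq_qr) eqxx.
  rewrite eq_sym (negbTE neq_qs) eq_sym (negbTE neq_rs) eqxx !modn_small //.
  - exact: leq_trans c2 (prime_gt1 pr_s).
  - exact: leq_trans b2 (prime_gt1 pr_r).
  - exact: leq_trans a2 (prime_gt1 pr_q).
exists x; first by rewrite inE xq xr xs.
apply/XadjP => p pr_p p_n.
case: (eqVneq p q) => [-> | p_q]; first by rewrite xq.
case: (eqVneq p r) => [-> | p_r]; first by rewrite xr.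
case: (eqVneq p s) => [-> | p_s]; first by rewrite xs.
by rewrite xmod // /res (negbTE p_q) (negbTE p_r) (negbTE p_s) modn_succ_neq ?prime_gt1.
Qed.

Lemma code_set_maxindep : Xmaxindep code_set.
Proof. exact: Xmaxindep_dominating code_set_indep code_set_dominating. Qed.

Local Notation Q := (q * r * s).

Lemma code_set_residue_inj : {in code_set &, forall x y : 'I_n,
  x %/ Q = y %/ Q -> x %% q = y %% q -> x %% r = y %% r -> x = y}.
Proof.
move=> x y; rewrite !inE => Sx Sy Ediv Eq Er.
have Es : x %% s = y %% s.
  by rewrite (even_weight3_last Sx) (even_weight3_last Sy) Eq Er.
have cop_qr : coprime q r by rewrite prime_coprime // dvdn_prime2.
have cop_qrs : coprime (q * r) s.
  by rewrite coprimeMl !prime_coprime // !dvdn_prime2 // neq_qs neq_rs.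
have EQ : x %% Q = y %% Q.
  by apply/eqP; rewrite chinese_remainder // chinese_remainder // Eq Er Es !eqxx.
by apply: val_inj; rewrite /= (divn_eq x Q) (divn_eq y Q) Ediv EQ.
Qed.

Lemma card_code_set : #|code_set| <= 4 * (n %/ Q).
Proof.
have Q_gt0 : 0 < Q by rewrite !muln_gt0 !prime_gt0.
pose enc (x : 'I_n) := x %/ Q * 4 + x %% q * 2 + x %% r.
have enc_lt x : x \in code_set -> enc x < 4 * (n %/ Q).
  rewrite inE => /and4P[xq xr _ _].
  by apply: bits_encode_lt; rewrite // ltn_divLR // divnK.
rewrite cardE -(size_map enc) -(size_iota 0 (4 * (n %/ Q))).
apply: uniq_leq_size => [|_ /mapP[x xS ->]]; last first.
  by rewrite mem_iota enc_lt // -mem_enum.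
rewrite map_inj_in_uniq ?enum_uniq // => x y; rewrite !mem_enum => Sx Sy.
move: (Sx) (Sy); rewrite !inE /enc => /and4P[xq xr _ _] /and4P[yq yr _ _] E.
by have [] := bits_encode_inj xq xr yq yr E; apply: code_set_residue_inj.
Qed.

Lemma iX_le_three_prime_factors : iX n <= 4 * (n %/ Q).
Proof. exact: leq_trans (iX_le_card code_set_maxindep) card_code_set. Qed.

End ThreePrimeFactors.

Lemma prod_split_last3 k (F : 'I_k.+3 -> nat) : \prod_(i < k.+3) F i =
  (\prod_(i < k.+3 | i < k) F i) * (F (inord k) * F (inord k.+1) * F (inord k.+2)).
Proof.
rewrite (bigID (fun i : 'I_k.+3 => i < k)) /=; congr (_ * _).
rewrite big_mkcond !big_ord_recr /= big1 => [|i _]; last by rewrite /= ltn_ord.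
rewrite ltnn ltnNge leqnSn ltnNge ltnW //= mul1n.
by congr (_ * _ * _); congr F; apply: val_inj; rewrite /= inordK //; lia.
Qed.

Theorem theorem4p10 (t : nat) (p : 'I_t -> nat) (n : nat) :
  3 <= t ->
  (forall i, prime (p i)) ->
  injective p ->
  n = \prod_(i < t) p i ->
  iX n <= 4 * \prod_(i < t | i < t - 3) p i.
Proof.
case: t p => [|[|[|k]]] // p _ pr_p inj_p ->.
have -> : k.+3 - 3 = k by rewrite !subSS subn0.
have neq_p (i j : nat) : i != j -> i < k.+3 -> j < k.+3 ->
    p (inord i) != p (inord j).
  by move=> ij ? ?; rewrite (inj_eq inj_p) -val_eqE /= !inordK.
rewrite prod_split_last3; set m := \prod_(i < k.+3 | i < k) p i.
have Q_gt0 : 0 < p (inord k) * p (inord k.+1) * p (inord k.+2).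
  by rewrite !muln_gt0 !prime_gt0.
rewrite -{2}(mulnK m Q_gt0).
by apply: iX_le_three_prime_factors; first [exact: pr_p | exact: dvdn_mull | apply: neq_p; lia].
Qed.
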